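(* Let $a$ and $b$ be relatively prime integers with $1<a<b$ and $S=\langle a,b\rangle$. Let $i\in\{1,\dots,a-1\}$ with $I_{i,a}(S)\neq\varnothing$ and let $h_i=\min I_{i,a}(S)$. If $n$ is the smallest positive integer such that $h_i+na\in b\mathbb{N}$, then $I_{i,a}(S)=\{h_i,h_i+a,\dots,h_i+(n-1)a\}$.
   Context: $\mathbb{N}$ is the set of nonnegative integers, $b\mathbb{N}=\{bk:k\in\mathbb{N}\}$, and $\langle a,b\rangle=\{\lambda_1a+\lambda_2b:\lambda_1,\lambda_2\in\mathbb{N}\}$. $I(S)$ is the set of isolated gaps of $S$ ($x\in\mathbb{N}\setminus S$ with $x-1,x+1\in S$), and $I_{i,a}(S)=\{s\in I(S):s\equiv i\pmod a\}$. *)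

From mathcomp Require Import all_boot.

Definition inS (a b x : nat) : Prop := exists l1 l2 : nat, x = l1 * a + l2 * b.

Definition isolated_gap (a b x : nat) : Prop :=
  ~ inS a b x /\ 0 < x /\ inS a b x.-1 /\ inS a b x.+1.

Definition Iia (a b i x : nat) : Prop := isolated_gap a b x /\ x %% a = i.

(* Elements of I_{i,a}(S) are congruent to h modulo a, so they are the h + k a with k >= 0.
   Adding multiples of a preserves membership in S = <a,b>, so h + k a is an isolated gap
   as soon as it lies outside S; and if h + k a = l1 a + l2 b lies in S, then l1 < k
   (otherwise h would be in S) and h + (k - l1) a = l2 b is a multiple of b.  Hence
   h + k a is outside S exactly for k < n. *)
From mathcomp Require Import all_boot.
From mathcomp Require Import zify.

Section ShiftByGenerator.

Variables a b : nat.

Lemma inS_addMa x k : inS a b x -> inS a b (x + k * a).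
Proof. by move=> [l1 [l2 ->]]; exists (l1 + k), l2; lia. Qed.

Lemma inS_dvd y : b %| y -> inS a b y.
Proof. by move=> /dvdnP [l ->]; exists 0, l. Qed.

Lemma inS_addMa_dvd x k :
  ~ inS a b x -> inS a b (x + k * a) -> exists2 m, 0 < m <= k & b %| x + m * a.
Proof.
move=> xS [l1 [l2 E]].
have lt_l1k : l1 < k.
  by rewrite ltnNge; apply/negP => le_kl1; apply: xS; exists (l1 - k), l2; nia.
exists (k - l1); first lia.
by apply/dvdnP; exists l2; nia.
Qed.

Lemma isolated_gap_addMa x k :
  isolated_gap a b x -> ~ inS a b (x + k * a) -> isolated_gap a b (x + k * a).
Proof.
move=> [_ [x_gt0 [xmS xpS]]] xkS; split; first by [].
split; first lia.
have -> : (x + k * a).-1 = x.-1 + k * a by lia.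
have -> : (x + k * a).+1 = x.+1 + k * a by lia.
by split; apply: inS_addMa.
Qed.

End ShiftByGenerator.

Theorem lemma4p6 (a b i h n : nat) :
  1 < a -> a < b -> coprime a b ->
  0 < i -> i < a ->
  (* h = min I_{i,a}(S) (in particular I_{i,a}(S) is nonempty) *)
  Iia a b i h -> (forall x, Iia a b i x -> h <= x) ->
  (* n = smallest positive integer with h + n a in bN *)
  0 < n -> b %| h + n * a ->
  (forall m, 0 < m -> m < n -> ~~ (b %| h + m * a)) ->
  forall x, Iia a b i x <-> exists2 k, k < n & x = h + k * a.
Proof.
move=> _ _ _ _ _ [hgap hi] hmin _ bn nmin x; split.
- move=> Ix; have le_hx := hmin x Ix; case: Ix => [[xS _] xi].
  have /dvdnP [k xE] : a %| x - h by rewrite -eqn_mod_dvd // xi hi.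
  exists k; last by lia.
  rewrite ltnNge; apply/negP => le_nk; apply: xS.
  have -> : x = h + n * a + (k - n) * a by nia.
  exact/inS_addMa/inS_dvd.
- move=> [k lt_kn ->]; split; last by rewrite addnC modnMDl.
  apply: isolated_gap_addMa => // hkS.
  have [m /andP [m_gt0 le_mk]] := @inS_addMa_dvd a b h k hgap.1 hkS.
  by apply/negP/nmin => //; apply: leq_ltn_trans lt_kn.
Qed.
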